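(* In the single-intervention standard stepped-wedge design ($m=1$, $T\ge3$ periods, $I=T-1$ clusters, cluster $i$ receiving the intervention exactly in periods $j>i$), if $\mathrm E(\bar{\mathbf y}_i)=\beta+\mathbf Z_i\delta$ with $\delta=(\delta_1,\dots,\delta_{T-1})'$ and $2+b-bT\neq0$, the GLS constant-effect estimator $\hat\theta$ satisfies $$\mathrm E(\hat\theta)=\frac{6\sum_{j=1}^{T-1}w_j\delta_j}{T(T-1)(T-2)(2+b-bT)},\qquad w_j=(T-j)\big[(b-1-bT)j+(1+b)(T-1)\big].$$
   Context: Cluster-period means $\bar{\mathbf y}_i\in\mathbb R^T$ with $\mathrm{Cov}(\bar{\mathbf y}_i)=\Sigma=\sigma_\alpha^2\mathbf 1\mathbf 1'+(\sigma_\epsilon^2/n)\mathbf I_T$, common cluster-period size $n$. $x_{ij}=1$ iff $j>i$; $\mathbf X_i=(x_{i1},\dots,x_{iT})'$. Exposure time $e_{ij}=\max\{j-i,0\}$; $\mathbf Z_i$ is the $T\times(T-1)$ matrix with $(j,e)$ entry $1$ if $e_{ij}=e$, else $0$. $\hat\theta$ is the GLS estimator (known $\Sigma$) of $\theta$ in the working model $\bar{\mathbf y}_i=\beta+\mathbf X_i\theta+\mathbf 1\alpha_i+\bar\epsilon_i$ with unrestricted $\beta\in\mathbb R^T$. $b=\sigma_\alpha^2/(T\sigma_\alpha^2+\sigma_\epsilon^2/n)$. *)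

From HB Require Import structures.
From mathcomp Require Import all_boot all_order all_algebra.
From mathcomp Require Import all_classical all_reals all_analysis.
Set Implicit Arguments. Unset Strict Implicit. Unset Printing Implicit Defensive.
Import Order.TTheory GRing.Theory Num.Theory.
Local Open Scope ring_scope.

Section SW.
Variable R : realType.
Variable T : nat.
(* Periods j = 1..T are represented by j' : 'I_T with j = j'+1;
   clusters i = 1..T-1 by i' : 'I_(T-1) with i = i'+1;
   exposure times e = 1..T-1 by e' : 'I_(T-1) with e = e'+1. *)

Definition Xvec (i : 'I_(T - 1)) : 'cV[R]_T := \col_(j < T) ((i < j)%N)%:R.

Definition expo (i : 'I_(T - 1)) (j : 'I_T) : nat := (j - i)%N.

Definition Zmat (i : 'I_(T - 1)) : 'M[R]_(T, T - 1) :=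
  \matrix_(j < T, e < T - 1) ((expo i j == e.+1)%N)%:R.

Definition Sigma (sa2 se2 : R) (n : nat) : 'M[R]_T :=
  sa2 *: const_mx 1 + (se2 / n%:R) *: 1%:M.

(* design matrix of the working model for cluster i: ybar_i = [I_T | X_i] (beta; theta) + ... *)
Definition Dmat (i : 'I_(T - 1)) : 'M[R]_(T, T + 1) := row_mx 1%:M (Xvec i).

Definition gls_info (S : 'M[R]_T) : 'M[R]_(T + 1) :=
  \sum_(i < T - 1) (Dmat i)^T *m invmx S *m Dmat i.

Definition gls_score (S : 'M[R]_T) (y : 'I_(T - 1) -> 'cV[R]_T) : 'cV[R]_(T + 1) :=
  \sum_(i < T - 1) (Dmat i)^T *m invmx S *m y i.

Definition gls (S : 'M[R]_T) (y : 'I_(T - 1) -> 'cV[R]_T) : 'cV[R]_(T + 1) :=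
  invmx (gls_info S) *m gls_score S y.

Definition theta_hat (S : 'M[R]_T) (y : 'I_(T - 1) -> 'cV[R]_T) : R :=
  gls S y (rshift T (ord0 : 'I_1)) 0.

Definition bcoef (sa2 se2 : R) (n : nat) : R := sa2 / (T%:R * sa2 + se2 / n%:R).

Definition wcoef (b : R) (j : nat) : R :=
  (T%:R - j%:R) * ((b - 1 - b * T%:R) * j%:R + (1 + b) * (T%:R - 1)).

End SW.

From HB Require Import structures.
From mathcomp Require Import all_boot all_order all_algebra.
From mathcomp Require Import all_classical all_reals all_analysis.
From mathcomp Require Import ring zify.
Import Order.TTheory GRing.Theory Num.Theory.
Local Open Scope ring_scope.

Set Implicit Arguments. Unset Strict Implicit. Unset Printing Implicit Defensive.

(* With unrestricted period effects beta, eliminating beta from the GLS normal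
   equations gives theta_hat = theta_num W y / theta_num W X, where W = Sigma^-1.
   This is linear in the data, so E(theta_hat) is theta_hat evaluated at the
   means beta + Z_i delta, and there beta drops out of theta_num.  Sigma is
   compound symmetric with inverse (n / se2) (I - b 1 1'), so every bilinear
   form reduces to sums of i and i^2 over the staircase design: the denominator
   is T (T - 2) (2 + b - b T) / 12 and the numerator is
   (sum_j w_j delta_j) / (2 (T - 1)), up to the common factor n / se2. *)

Section BilinearForm.
Variables (R : comNzRingType) (T : nat) (W : 'M[R]_T).

Definition bform (u v : 'cV[R]_T) : R := (u^T *m W *m v) 0 0.

Lemma bformDr u v w : bform u (v + w) = bform u v + bform u w.
Proof. by rewrite /bform mulmxDr mxE. Qed.

Lemma bformZr u a v : bform u (a *: v) = a * bform u v.
Proof. by rewrite /bform -scalemxAr mxE. Qed.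

Lemma bformNr u v : bform u (- v) = - bform u v.
Proof. by rewrite /bform mulmxN mxE. Qed.

Lemma bform_sumr u (I : finType) (v : I -> 'cV[R]_T) :
  bform u (\sum_i v i) = \sum_i bform u (v i).
Proof. by rewrite /bform mulmx_sumr summxE. Qed.

Lemma bform_suml v (I : finType) (u : I -> 'cV[R]_T) :
  bform (\sum_i u i) v = \sum_i bform (u i) v.
Proof. by rewrite /bform raddf_sum /= mulmx_suml mulmx_suml summxE. Qed.

End BilinearForm.

Lemma bform_scale (R : comNzRingType) T (c : R) (W : 'M[R]_T) u v :
  bform (c *: W) u v = c * bform W u v.
Proof. by rewrite /bform -scalemxAr -scalemxAl mxE. Qed.

Lemma bform_compound (R : comNzRingType) T (b : R) (u v : 'cV[R]_T) :
  bform (1%:M - b *: const_mx 1) u v =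
  \sum_j u j 0 * v j 0 - b * ((\sum_j u j 0) * (\sum_j v j 0)).
Proof.
set one := const_mx 1 : 'cV[R]_T.
have J : const_mx 1 = one *m one^T.
  by apply/matrixP => a c; rewrite !mxE big_ord1 !mxE mulr1.
rewrite /bform J mulmxBr mulmxBl mulmx1 -scalemxAr -scalemxAl.
have -> : u^T *m (one *m one^T) *m v = (u^T *m one) *m (one^T *m v).
  by rewrite !mulmxA.
rewrite !mxE big_ord1.
congr (_ - _ * (_ * _)).
- by apply: eq_bigr => j _; rewrite mxE.
- by rewrite mxE; apply: eq_bigr => j _; rewrite !mxE mulr1.
- by rewrite mxE; apply: eq_bigr => j _; rewrite !mxE mul1r.
Qed.

Lemma compound_symmetry_inv (R : fieldType) T (a s : R) :
  s != 0 -> T%:R * a + s != 0 ->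
  (a *: const_mx 1 + s *: 1%:M : 'M[R]_T) *m
     (s^-1 *: (1%:M - (a / (T%:R * a + s)) *: const_mx 1)) = 1%:M.
Proof.
move=> s0 d0; set J := const_mx 1 : 'M[R]_T.
have JJ : J *m J = T%:R *: J.
  apply/matrixP => i j; rewrite !mxE.
  under eq_bigr do rewrite !mxE mulr1.
  by rewrite sumr_const card_ord mulr1.
have SJ : (a *: J + s *: 1%:M) *m J = (T%:R * a + s) *: J.
  by rewrite mulmxDl -!scalemxAl JJ mul1mx scalerA scalerDl mulrC.
rewrite -scalemxAr mulmxBr mulmx1 -scalemxAr SJ scalerA.
by rewrite divfK // addrAC subrr add0r scalerA mulVf ?scale1r.
Qed.

Lemma sum_col_mx (R : nmodType) m1 m2 n (I : finType)
    (a : I -> 'M[R]_(m1, n)) (b : I -> 'M[R]_(m2, n)) :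
  \sum_i col_mx (a i) (b i) = col_mx (\sum_i a i) (\sum_i b i).
Proof.
elim/big_rec3: _ => [|i x y z _ ->]; first by rewrite col_mx0.
by rewrite add_col_mx.
Qed.

Section ProfiledGLS.
Variables (R : realType) (T : nat).
Local Notation X := (Xvec R (T:=T)).
Local Notation Xs := (\sum_(i < T - 1) X i).

Definition design_score (W : 'M[R]_T) (y : 'I_(T - 1) -> 'cV[R]_T) : 'cV[R]_(T + 1) :=
  \sum_i (Dmat R i)^T *m W *m y i.

(* The contrast left once beta is profiled out; see theta_hat_profile. *)
Definition theta_num (W : 'M[R]_T) (y : 'I_(T - 1) -> 'cV[R]_T) : R :=
  \sum_i bform W (X i) (y i) - bform W Xs (\sum_i y i) / (T - 1)%:R.

Lemma theta_num_scale c W y : theta_num (c *: W) y = c * theta_num W y.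
Proof.
rewrite /theta_num bform_scale mulrBr mulr_sumr mulrA.
by under eq_bigr do rewrite bform_scale.
Qed.

Lemma design_scoreE W y :
  design_score W y = col_mx (W *m \sum_i y i) (\sum_i bform W (X i) (y i))%:M.
Proof.
rewrite /design_score raddf_sum /=.
under eq_bigr => i _ do rewrite /Dmat tr_row_mx trmx1 mul_col_mx mul_col_mx
  mul1mx (mx11_scalar (_ *m _ *m _)).
rewrite sum_col_mx; congr col_mx.
by apply/matrixP=> a b; rewrite !ord1 summxE !mxE mulr1n; apply: eq_bigr => i _;
  rewrite mxE mulr1n.
Qed.

Lemma Dmat_mul_col_mx i (gb : 'cV[R]_T) (th : R) :
  Dmat R i *m col_mx gb th%:M = gb + th *: X i.
Proof. by rewrite /Dmat mul_row_col mul1mx mul_mx_scalar. Qed.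

Lemma gls_info_col_mx S (gb : 'cV[R]_T) (th : R) :
  gls_info S *m col_mx gb th%:M =
  col_mx (invmx S *m ((T - 1)%:R *: gb + th *: Xs))
    (bform (invmx S) Xs gb + th * \sum_i bform (invmx S) (X i) (X i))%:M.
Proof.
rewrite /gls_info mulmx_suml.
under eq_bigr => i _ do rewrite -mulmxA Dmat_mul_col_mx.
rewrite -/(design_score _ _) design_scoreE big_split /= sumr_const card_ord scaler_nat.
rewrite -scaler_sumr bform_suml mulr_sumr -big_split /=.
by congr (col_mx _ (_%:M)); apply: eq_bigr => i _; rewrite bformDr bformZr.
Qed.

Hypothesis T_gt1 : (1 < T)%N.
Variable S : 'M[R]_T.
Hypothesis S_unit : S \in unitmx.
Hypothesis den_neq0 : theta_num (invmx S) X != 0.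

Let T1_neq0 : (T - 1)%:R != 0 :> R.
Proof. by rewrite pnatr_eq0 -lt0n subn_gt0. Qed.

Lemma gls_info_unit : gls_info S \in unitmx.
Proof.
(* For a kernel vector (gb, th) the first block forces gb = - th / (T - 1) *: Xs,
   and then the second block reads th * theta_num W X = 0. *)
have ker (g : 'cV[R]_(T + 1)) : gls_info S *m g = 0 -> g = 0.
  rewrite -(vsubmxK g) (mx11_scalar (dsubmx g)).
  set gb := usubmx g; set th := dsubmx g 0 0.
  rewrite gls_info_col_mx -col_mx0 => /eq_col_mx [].
  move=> /(congr1 (mulmx S)) H1 /(congr1 (fun A : 'M[R]_1 => A 0 0)).
  rewrite mulmxA mulmxV // mul1mx mulmx0 in H1.
  have gbE : gb = - ((T - 1)%:R^-1 * th) *: Xs.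
    apply: (scalerI T1_neq0); rewrite scalerA mulrN mulrA divff // mul1r scaleNr.
    by apply/eqP; rewrite -addr_eq0 H1.
  rewrite !mxE /= mulr1n {1}gbE bformZr => H2.
  have th0 : th = 0.
    have /eqP : th * theta_num (invmx S) X = 0 by rewrite -H2 /theta_num; ring.
    by rewrite mulf_eq0 (negbTE den_neq0) orbF => /eqP.
  rewrite gbE th0 mulr0 oppr0 scale0r; congr col_mx.
  by apply/matrixP=> a b; rewrite !mxE mul0rn.
rewrite -unitmx_tr -row_free_unit; apply: inj_row_free => v /(congr1 trmx).
rewrite trmx_mul trmxK trmx0 => /ker /(congr1 trmx).
by rewrite trmxK trmx0.
Qed.

Lemma theta_hat_profile y :
  theta_hat S y = theta_num (invmx S) y / theta_num (invmx S) X.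
Proof.
set W := invmx S; set th := theta_num W y / theta_num W X.
set gb := (T - 1)%:R^-1 *: (\sum_i y i - th *: Xs).
have score : gls_info S *m col_mx gb th%:M = gls_score S y.
  rewrite gls_info_col_mx [gls_score S y]design_scoreE; congr col_mx.
    by rewrite /gb scalerA divff // scale1r subrK.
  congr (_%:M); rewrite /gb bformZr bformDr bformNr bformZr /th /theta_num.
  field; rewrite T1_neq0 /=.
  have -> : (\sum_i bform W (X i) (X i)) * (T - 1)%:R - bform W Xs (\sum_i X i) =
      theta_num W X * (T - 1)%:R by rewrite /theta_num mulrBl divfK.
  by rewrite mulf_neq0.
by rewrite /theta_hat /gls -score mulKmx ?gls_info_unit // col_mxEd mxE eqxx mulr1n.
Qed.

End ProfiledGLS.

Lemma sum_ord_indicator_eq (R : pzSemiRingType) (T c : nat) (f : nat -> R) :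
  \sum_(j < T) ((j == c :> nat)%:R * f j) = (c < T)%:R * f c.
Proof.
elim: T => [|T IH]; first by rewrite big_ord0 ltn0 mul0r.
rewrite big_ord_recr /= IH.
case: (ltngtP c T) => h.
- by rewrite mul0r addr0 ltnS ltnW.
- by rewrite !mul0r addr0 ltnS leqNgt h mul0r.
- by rewrite h ltnSn mul0r add0r.
Qed.

Lemma sum_ord_indicator_lt (R : pzSemiRingType) (T k : nat) (f : nat -> R) : (k <= T)%N ->
  \sum_(i < T) ((i < k)%:R * f i) = \sum_(i < k) f i.
Proof.
move=> kT; rewrite (big_ord_widen T f kT) [RHS]big_mkcond /=.
by apply: eq_bigr => i _; case: (i < k)%N; rewrite ?mul1r ?mul0r.
Qed.

Lemma sumr_ord_natr (R : numFieldType) (k : nat) :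
  \sum_(i < k) (i%:R : R) = k%:R * (k%:R - 1) / 2.
Proof.
elim: k => [|k IH]; first by rewrite big_ord0 !mul0r.
by rewrite big_ord_recr /= IH -natr1; field.
Qed.

Lemma sumr_ord_natr_sqr (R : numFieldType) (k : nat) :
  \sum_(i < k) (i%:R ^+ 2 : R) = k%:R * (k%:R - 1) * (2 * k%:R - 1) / 6.
Proof.
elim: k => [|k IH]; first by rewrite big_ord0 !mul0r.
by rewrite big_ord_recr /= IH -natr1; field.
Qed.

Lemma sumr_ord_affine (R : numFieldType) (k : nat) (c0 c1 : R) :
  \sum_(i < k) (c0 + c1 * i%:R) = c0 * k%:R + c1 * (k%:R * (k%:R - 1) / 2).
Proof. by rewrite big_split /= sumr_const card_ord -mulr_sumr sumr_ord_natr mulr_natr. Qed.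

Lemma sumr_ord_quadratic (R : numFieldType) (k : nat) (c0 c1 c2 : R) :
  \sum_(i < k) (c0 + c1 * i%:R + c2 * i%:R ^+ 2) =
  c0 * k%:R + c1 * (k%:R * (k%:R - 1) / 2) + c2 * (k%:R * (k%:R - 1) * (2 * k%:R - 1) / 6).
Proof. by rewrite big_split /= sumr_ord_affine -mulr_sumr sumr_ord_natr_sqr. Qed.

Section SteppedWedge.
Variables (R : realType) (T : nat).
Local Notation X := (Xvec R (T:=T)).
Local Notation Xs := (\sum_(i < T - 1) X i).

Lemma XvecE (i : 'I_(T - 1)) (j : 'I_T) : X i j 0 = (i < j)%:R.
Proof. by rewrite mxE. Qed.

Lemma Xvec_sqr (i : 'I_(T - 1)) (j : 'I_T) : X i j 0 * X i j 0 = X i j 0.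
Proof. by rewrite mxE; case: (i < j)%N; rewrite ?mulr1 ?mulr0. Qed.

Lemma Xvec_cluster_sum (j : 'I_T) : Xs j 0 = j%:R.
Proof.
rewrite summxE.
under eq_bigr => i _ do rewrite mxE -[(_ < _)%:R]mulr1.
rewrite (@sum_ord_indicator_lt R (T - 1) j (fun _ => 1)); last by have := ltn_ord j; lia.
by rewrite sumr_const card_ord.
Qed.

Lemma Xvec_period_sum (i : 'I_(T - 1)) : \sum_(j < T) X i j 0 = T%:R - 1 - i%:R.
Proof.
have -> : \sum_(j < T) X i j 0 = \sum_(j < T) (1 - (j < i.+1)%:R * 1).
  apply: eq_bigr => j _; rewrite mxE mulr1 ltnS ltnNge.
  by case: (j <= i)%N; rewrite ?subr0 ?subrr.
rewrite sumrB sumr_const card_ord (@sum_ord_indicator_lt R T i.+1 (fun _ => 1)).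
  by rewrite sumr_const card_ord -natr1; ring.
by have := ltn_ord i; lia.
Qed.

Lemma Zmat_mulE (i : 'I_(T - 1)) (delta : 'cV[R]_(T - 1)) (j : 'I_T) :
  (Zmat R i *m delta) j 0 = \sum_(e < T - 1) ((j == (i + e.+1)%N :> nat)%:R * delta e 0).
Proof.
rewrite mxE; apply: eq_bigr => e _; rewrite mxE /expo.
by congr (_%:R * _); apply/eqP/eqP; lia.
Qed.

(* Cluster i has exposure time e+1 exactly in period i+e+1, if that period exists. *)
Lemma sum_period_Zmat (i : 'I_(T - 1)) (delta : 'cV[R]_(T - 1)) (F : nat -> R) :
  \sum_(j < T) F j * (Zmat R i *m delta) j 0 =
  \sum_(e < T - 1) delta e 0 * ((i + e.+1 < T)%:R * F (i + e.+1)%N).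
Proof.
under eq_bigr => j _ do rewrite Zmat_mulE mulr_sumr.
rewrite exchange_big /=; apply: eq_bigr => e _.
rewrite -(sum_ord_indicator_eq T (i + e.+1) F) mulr_sumr; apply: eq_bigr => j _.
by ring.
Qed.

Lemma theta_num_shift (W : 'M[R]_T) (beta : 'cV[R]_T) (z : 'I_(T - 1) -> 'cV[R]_T) :
  (1 < T)%N ->
  theta_num W (fun i => beta + z i) =
  \sum_i (bform W (X i) (z i) - bform W Xs (z i) / (T - 1)%:R).
Proof.
move=> T_gt1; have T1_neq0 : (T - 1)%:R != 0 :> R by rewrite pnatr_eq0 -lt0n subn_gt0.
rewrite /theta_num sumrB -mulr_suml -bform_sumr.
under eq_bigr do rewrite bformDr.
rewrite big_split /= -bform_suml big_split /= sumr_const card_ord -scaler_nat.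
by rewrite bformDr bformZr; field.
Qed.

Section CompoundSymmetricWeight.
Variable b : R.
Local Notation W0 := (1%:M - b *: const_mx 1 : 'M[R]_T).
Hypothesis T_gt1 : (1 < T)%N.

Let T1E : (T - 1)%:R = T%:R - 1 :> R.
Proof. by rewrite natrB // ltnW. Qed.

Let T1_neq0 : T%:R - 1 != 0 :> R.
Proof. by rewrite -T1E pnatr_eq0 -lt0n subn_gt0. Qed.

Lemma theta_num_Xvec : theta_num W0 X = T%:R * (T%:R - 2) * (2 + b - b * T%:R) / 12.
Proof.
transitivity (\sum_(i < T - 1) ((T%:R - 1) - b * (T%:R - 1) ^+ 2
   + (-1 + 2 * b * (T%:R - 1)) * i%:R + (- b) * i%:R ^+ 2)
   - bform W0 Xs Xs / (T - 1)%:R).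
  congr (_ - _); apply: eq_bigr => i _.
  rewrite bform_compound.
  under eq_bigr do rewrite Xvec_sqr.
  by rewrite Xvec_period_sum; ring.
rewrite sumr_ord_quadratic bform_compound.
under eq_bigr do rewrite Xvec_cluster_sum -expr2.
under [X in X * X]eq_bigr do rewrite Xvec_cluster_sum.
by rewrite sumr_ord_natr_sqr sumr_ord_natr T1E; field.
Qed.

Definition cluster_weight (i e : nat) : R :=
  1 - b * (T%:R - 1 - i%:R) - (i%:R + e%:R + 1) / (T%:R - 1) + b * T%:R / 2.

Lemma theta_num_cluster (delta : 'cV[R]_(T - 1)) (i : 'I_(T - 1)) :
  bform W0 (X i) (Zmat R i *m delta) - bform W0 Xs (Zmat R i *m delta) / (T - 1)%:R =
  \sum_(e < T - 1) delta e 0 * ((i + e.+1 < T)%:R * cluster_weight i e).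
Proof.
rewrite !bform_compound Xvec_period_sum; set z := Zmat R i *m delta.
rewrite [\sum_j Xs j 0 * _](eq_bigr (fun j : 'I_T => j%:R * z j 0)); last first.
  by move=> j _; rewrite Xvec_cluster_sum.
rewrite [\sum_j Xs j 0](eq_bigr (fun j : 'I_T => j%:R)); last first.
  by move=> j _; rewrite Xvec_cluster_sum.
rewrite [\sum_j X i j 0 * _](eq_bigr (fun j : 'I_T => (i < j)%:R * z j 0)); last first.
  by move=> j _; rewrite XvecE.
rewrite [\sum_j z j 0](eq_bigr (fun j : 'I_T => 1 * z j 0)); last first.
  by move=> j _; rewrite mul1r.
rewrite /z (sum_period_Zmat i delta (fun j => (i < j)%:R)).
rewrite (sum_period_Zmat i delta (fun _ => 1)) sum_period_Zmat sumr_ord_natr.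
set A := \sum_(e < T - 1) _ * (_ * 1).
have -> : \sum_(e < T - 1) delta e 0 * ((i + e.+1 < T)%:R * (i < i + e.+1)%:R) = A.
  by apply: eq_bigr => e _; rewrite addnS ltnS leq_addr.
set H := \sum_(e < T - 1) _ * (_ * (_ + _)%:R).
have -> : A - b * ((T%:R - 1 - i%:R) * A)
    - (H - b * (T%:R * (T%:R - 1) / 2 * A)) / (T - 1)%:R =
    (1 - b * (T%:R - 1 - i%:R) + b * T%:R / 2) * A - (T%:R - 1)^-1 * H.
  by rewrite T1E; field.
rewrite /A /H !big_distrr -sumrB; apply: eq_bigr => e _ /=.
by rewrite /cluster_weight -addnS natrD -natr1; field.
Qed.

Lemma sum_cluster_weight (e : 'I_(T - 1)) :
  \sum_(i < T - 1) ((i + e.+1 < T)%:R * cluster_weight i e) =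
  wcoef T b e.+1 / (2 * (T%:R - 1)).
Proof.
have e_lt := ltn_ord e.
have indE (i : nat) : (i + e.+1 < T)%N = (i < T - e.+1)%N by lia.
under eq_bigr => i _ do rewrite indE.
rewrite (@sum_ord_indicator_lt R (T - 1) (T - e.+1) (fun i => cluster_weight i e));
  last by lia.
transitivity (\sum_(i < T - e.+1)
   ((1 - b * (T%:R - 1) - (e%:R + 1) / (T%:R - 1) + b * T%:R / 2)
   + (b - 1 / (T%:R - 1)) * i%:R)).
  by apply: eq_bigr => i _; rewrite /cluster_weight; ring.
rewrite sumr_ord_affine natrB; last by lia.
by rewrite /wcoef -natr1; field.
Qed.

Lemma theta_num_Zmat (beta : 'cV[R]_T) (delta : 'cV[R]_(T - 1)) :
  theta_num W0 (fun i => beta + Zmat R i *m delta) =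
  (\sum_(j < T - 1) wcoef T b j.+1 * delta j 0) / (2 * (T%:R - 1)).
Proof.
rewrite theta_num_shift // (eq_bigr _ (fun i _ => theta_num_cluster delta i)).
rewrite exchange_big /= mulr_suml; apply: eq_bigr => e _.
by rewrite -mulr_sumr sum_cluster_weight mulrCA mulrA.
Qed.

End CompoundSymmetricWeight.

End SteppedWedge.

Lemma Sigma_mul_inv (R : realType) (T : nat) (sa2 se2 : R) (n : nat) :
  (0 < n)%N -> 0 <= sa2 -> 0 < se2 ->
  Sigma T sa2 se2 n *m ((se2 / n%:R)^-1 *: (1%:M - bcoef T sa2 se2 n *: const_mx 1)) = 1%:M.
Proof.
move=> n_gt0 sa2_ge0 se2_gt0; have s_gt0 : 0 < se2 / n%:R by rewrite divr_gt0 ?ltr0n.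
by apply: compound_symmetry_inv; rewrite gt_eqF // ltr_wpDl // mulr_ge0.
Qed.

Lemma theta_hat_stepped_wedge (R : realType) (T : nat) (sa2 se2 : R) (n : nat)
    (beta : 'cV[R]_T) (delta : 'cV[R]_(T - 1)) :
  (3 <= T)%N -> (0 < n)%N -> 0 <= sa2 -> 0 < se2 ->
  2 + bcoef T sa2 se2 n - bcoef T sa2 se2 n * T%:R != 0 ->
  theta_hat (Sigma T sa2 se2 n) (fun i => beta + Zmat R i *m delta) =
  (6 * \sum_(j < T - 1) wcoef T (bcoef T sa2 se2 n) j.+1 * delta j 0)
    / (T%:R * (T%:R - 1) * (T%:R - 2) * (2 + bcoef T sa2 se2 n - bcoef T sa2 se2 n * T%:R)).
Proof.
move=> T_ge3 n_gt0 sa2_ge0 se2_gt0.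
have := Sigma_mul_inv T n_gt0 sa2_ge0 se2_gt0.
set S := Sigma T sa2 se2 n; set s := se2 / n%:R; set b := bcoef T sa2 se2 n => SW b_neq0.
have S_unit := (mulmx1_unit SW).1.
have invS : invmx S = s^-1 *: (1%:M - b *: const_mx 1).
  by rewrite -[RHS](mulKmx S_unit) SW mulmx1.
have T_gt1 : (1 < T)%N by apply: ltnW.
have s_neq0 : s != 0 by rewrite gt_eqF // divr_gt0 ?ltr0n.
have T_neq0 : T%:R != 0 :> R by rewrite pnatr_eq0 -lt0n ltnW.
have T1_neq0 : T%:R - 1 != 0 :> R.
  by rewrite -(@natrB R T 1) ?pnatr_eq0 ?subn_eq0 -?ltnNge // ltnW.
have T2_neq0 : T%:R - 2 != 0 :> R.
  by rewrite -(@natrB R T 2) ?pnatr_eq0 ?subn_eq0 -?ltnNge // ltnW.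
have den_neq0 : theta_num (invmx S) (Xvec R (T:=T)) != 0.
  by rewrite invS theta_num_scale theta_num_Xvec // !mulf_neq0 ?invr_neq0 // pnatr_eq0.
rewrite (theta_hat_profile T_gt1 S_unit den_neq0) invS !theta_num_scale.
rewrite theta_num_Zmat // theta_num_Xvec //.
by field; rewrite s_neq0 T_neq0 T1_neq0 T2_neq0 b_neq0.
Qed.

Lemma expectation_lincomb (R : realType) (d : measure_display) (Omega : measurableType d)
    (P : probability Omega R) (I : Type) (s : seq I) (c : I -> R)
    (X : I -> Omega -> R) (e : I -> R) :
  (forall i, X i \in Lfun P 1) -> (forall i, ('E_P[X i] = (e i)%:E)%E) ->
  ('E_P[fun w => (\sum_(i <- s) c i * X i w)%R] = (\sum_(i <- s) c i * e i)%:E)%E.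
Proof.
move=> X_L1 EX; elim: s => [|a s IH].
  by under eq_fun do rewrite big_nil; rewrite big_nil expectation_cst.
have sum_L1 : (fun w => \sum_(i <- s) c i * X i w) \in Lfun P 1.
  rewrite (_ : (fun w => _) = \sum_(i <- s) (c i *: X i)); last by rewrite fct_sumE.
  by apply: rpred_sum => i _; apply: rpredZ.
have a_L1 : c a \o* X a \in Lfun P 1.
  by rewrite (_ : c a \o* X a = c a *: X a) ?rpredZ //; apply/funext => w /=; rewrite mulrC.
rewrite (_ : (fun w => _) = (c a \o* X a) \+ fun w => \sum_(i <- s) c i * X i w); last first.
  by apply/funext => w; rewrite big_cons /= mulrC.
by rewrite expectationD // IH expectationZl // EX big_cons -EFinM -EFinD.
Qed.

Definition theta_coef (R : realType) (T : nat) (S : 'M[R]_T)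
    (i : 'I_(T - 1)) (j : 'I_T) : R :=
  (invmx (gls_info S) *m ((Dmat R i)^T *m invmx S)) (rshift T (ord0 : 'I_1)) j.

Lemma theta_hat_lincomb (R : realType) (T : nat) (S : 'M[R]_T)
    (y : 'I_(T - 1) -> 'cV[R]_T) :
  theta_hat S y = \sum_p theta_coef S p.1 p.2 * y p.1 p.2 0.
Proof.
rewrite /theta_hat /gls /gls_score mulmx_sumr summxE.
rewrite -(pair_bigA _ (fun i j => theta_coef S i j * y i j 0)) /=.
by apply: eq_bigr => i _; rewrite /theta_coef !mulmxA mxE.
Qed.

Theorem mainTheorem3 (R : realType) (d : measure_display) (Omega : measurableType d)
  (P : probability Omega R) (T : nat) (sa2 se2 : R) (n : nat)
  (ybar : 'I_(T - 1) -> 'I_T -> {RV P >-> R})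
  (beta : 'cV[R]_T) (delta : 'cV[R]_(T - 1)) :
  (3 <= T)%N -> (0 < n)%N -> 0 <= sa2 -> 0 < se2 ->
  (forall i j, (ybar i j : Omega -> R) \in Lfun P 1) ->
  (forall i j, ('E_P[ybar i j] = ((beta + Zmat R i *m delta) j 0)%:E)%E) ->
  2 + bcoef T sa2 se2 n - bcoef T sa2 se2 n * T%:R != 0 ->
  ('E_P[fun w => theta_hat (Sigma T sa2 se2 n) (fun i => \col_j ybar i j w)] =
  ((6 * \sum_(j < T - 1) wcoef T (bcoef T sa2 se2 n) j.+1 * delta j 0)
    / (T%:R * (T%:R - 1) * (T%:R - 2)
       * (2 + bcoef T sa2 se2 n - bcoef T sa2 se2 n * T%:R)))%:E)%E.
Proof.
move=> T_ge3 n_gt0 sa2_ge0 se2_gt0 ybar_L1 E_ybar b_neq0.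
rewrite -(theta_hat_stepped_wedge beta delta) // theta_hat_lincomb.
under eq_fun => w do rewrite theta_hat_lincomb.
under eq_fun => w do under eq_bigr => p _ do rewrite mxE.
exact: expectation_lincomb (fun p => ybar_L1 p.1 p.2) (fun p => E_ybar p.1 p.2).
Qed.
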